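(* Let $k\in\mathbb{N}$ and let $P$ be a path with $k$ edges whose vertices in order are $x_0,x_1,\dots,x_k$. Let $L$ be an $m$-assignment for $P$ with $m\ge 2$. For each $(c,d)\in L(x_0)\times L(x_k)$, let $N(c,d)$ be the number of proper $L$-colorings of $P$ in which $x_0$ is colored $c$ and $x_k$ is colored $d$. Then for every such $(c,d)$, $$N(c,d)\ge \min\left\{\frac{(m-1)^k-(-1)^k}{m},\ \frac{(m-1)^k-(-1)^k}{m}+(-1)^k\right\}.$$ Moreover, there is a partition $\{A,B\}$ of $L(x_0)\times L(x_k)$ with $|A|=m$ and $|B|=m(m-1)$ such that $N(c,d)\ge \frac{(m-1)^k-(-1)^k}{m}+(-1)^k$ for all $(c,d)\in A$ and $N(c,d)\ge \frac{(m-1)^k-(-1)^k}{m}$ for all $(c,d)\in B$.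
   Context: An $m$-assignment $L$ for a graph assigns to each vertex $v$ a set $L(v)$ of exactly $m$ colors; a proper $L$-coloring is a proper vertex coloring $f$ with $f(v)\in L(v)$ for every vertex $v$. *)

From mathcomp Require Import all_boot all_order all_algebra.
Set Implicit Arguments. Unset Strict Implicit. Unset Printing Implicit Defensive.
Import Order.TTheory GRing.Theory Num.Theory.

(* The path P with k edges has vertices x_0,...,x_k, represented by 'I_k.+1;
   its edges are {x_i, x_{i+1}} for i < k. Colors come from a finite type C.
   A list assignment is L : 'I_k.+1 -> {set C}. *)

Definition proper_Lcol (k : nat) (C : finType) (L : 'I_k.+1 -> {set C})
    (f : {ffun 'I_k.+1 -> C}) : bool :=
  [forall i : 'I_k.+1, f i \in L i] &&
  [forall i : 'I_k, f (widen_ord (leqnSn k) i) != f (lift ord0 i)].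

Definition Ncount (k : nat) (C : finType) (L : 'I_k.+1 -> {set C}) (c d : C) : nat :=
  #|[set f : {ffun 'I_k.+1 -> C} |
      [&& proper_Lcol L f, f ord0 == c & f ord_max == d]]|.

Definition m_assignment (k : nat) (C : finType) (L : 'I_k.+1 -> {set C}) (m : nat) : Prop :=
  forall v, #|L v| = m.

From mathcomp Require Import all_boot all_order all_algebra.
From mathcomp Require Import ring lra.
Set Implicit Arguments. Unset Strict Implicit. Unset Printing Implicit Defensive.
Import Order.TTheory GRing.Theory Num.Theory.

(* Deleting x_k shows that a colouring ending in d is
   a colouring of the shorter path ending in some e in L(x_(k-1)) other than d, so
   N_k(c,d) is the sum of N_(k-1)(c,e) over L(x_(k-1)) minus d.  With
   a_k = ((m-1)^k - (-1)^k)/m, which satisfies a_(k+1) = (m-1) a_k + (-1)^k,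
   induction on k shows that N_k(c,e) >= a_k for every e in L(x_k) except for
   one colour e_0(c), where the bound is a_k + (-1)^k: for even k one colour
   carries a surplus, for odd k at most one colour a deficit.  Then A is the
   set of pairs (c, e_0(c)). *)

Local Open Scope ring_scope.

Lemma forall_ord_recr n (P : pred 'I_n.+1) :
  [forall i, P i] = [forall i : 'I_n, P (widen_ord (leqnSn n) i)] && P ord_max.
Proof.
apply/forallP/andP => [P_all | [/forallP P_widen P_max] i].
  by split; [apply/forallP => i |]; apply: P_all.
have [lt_i_n | ge_i_n] := ltnP i n.
  by have -> : i = widen_ord (leqnSn n) (Ordinal lt_i_n) by apply: val_inj.
by have -> : i = ord_max by apply/val_inj/anti_leq; rewrite ge_i_n -ltnS ltn_ord.
Qed.

Section BumpedLowerBound.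
Variables (R : realDomainType) (C : finType).

Definition bumped_lbound (S : {set C}) (x : C -> R) (a s : R) : Prop :=
  exists2 e0, e0 \in S & forall e, e \in S -> a + s *+ (e == e0) <= x e.

Lemma sumr_const_bump (A : {set C}) (a s : R) e0 :
  \sum_(e in A) (a + s *+ (e == e0)) = a *+ #|A| + s *+ (e0 \in A).
Proof.
rewrite big_split sumr_const /=; congr (_ + _).
have [Ae0 | Ae0] := boolP (e0 \in A).
- rewrite (big_setD1 _ Ae0) /= eqxx big1 ?addr0 // => e.
  by rewrite in_setD1 => /andP [/negbTE ->].
- by rewrite big1 // => e Ae; case: eqP => // Ee; rewrite -Ee Ae in Ae0.
Qed.

Lemma exists_point_agreeing (S T : {set C}) e0 :
  #|S| = #|T| -> e0 \in S ->
  exists2 d0, d0 \in T & forall d, d \in T -> d \in S -> (d == d0) = (d == e0).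
Proof.
move=> card_ST Se0; have [Te0 | Te0] := boolP (e0 \in T); first by exists e0.
have /subsetPn [d0 Td0 Sd0] : ~~ (T \subset S).
  apply: contra Te0 => /(subset_cardP (esym card_ST)) ->; exact: Se0.
exists d0 => // d Td Sd.
by rewrite (negbTE (memPn Sd0 d Sd)) (negbTE (memPn Te0 d Td)).
Qed.

Lemma bumped_lbound_sumD1 (S T : {set C}) (x : C -> R) (m : nat) (b : bool) (a : R) :
  #|S| = m -> #|T| = m -> b%:R <= a -> bumped_lbound S x a ((-1) ^+ b) ->
  bumped_lbound T (fun d => \sum_(e in S :\ d) x e)
    ((m%:R - 1) * a + (-1) ^+ b) (- (-1) ^+ b).
Proof.
move=> card_S card_T le_b_a [e0 Se0 x_ge].
(* d0 is e0 when e0 \in T, else a colour outside S, whose sum runs over all of S. *)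
have [d0 Td0 d0E] := exists_point_agreeing (etrans card_S (esym card_T)) Se0.
exists d0 => // d Td.
have sum_ge : \sum_(e in S :\ d) (a + (-1) ^+ b *+ (e == e0)) <= \sum_(e in S :\ d) x e.
  by apply: ler_sum => e /setD1P [_ /x_ge].
apply: le_trans sum_ge; rewrite sumr_const_bump in_setD1 Se0 andbT -[a *+ _]mulr_natr.
have := cardsD1 d S; rewrite card_S => ->; rewrite natrD {x_ge}.
have [Sd | Sd] := boolP (d \in S).
  rewrite [e0 == d]eq_sym -(d0E d Td Sd).
  by case: (d == d0); case: b le_b_a => /= le_b_a; rewrite ?mulr1n ?mulr0n; lra.
have -> : e0 != d by apply: contraNneq Sd => <-.
by case: (d == d0); case: b le_b_a => /= le_b_a; rewrite ?mulr1n ?mulr0n; nra.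
Qed.
End BumpedLowerBound.

Lemma graph_setX_partition (T U : finType) (A : {set T}) (B : {set U}) (g : T -> U) :
  {in A, forall c, g c \in B} ->
  let G := [set (c, g c) | c in A] in
  [/\ G :|: (setX A B :\: G) = setX A B, G :&: (setX A B :\: G) = set0,
      #|G| = #|A| & #|setX A B :\: G| = (#|A| * (#|B| - 1))%N].
Proof.
move=> gAB G; have sub_G : G \subset setX A B.
  by apply/subsetP => _ /imsetP [c Ac ->]; rewrite inE /= Ac gAB.
have card_G : #|G| = #|A| by apply: card_imset => c1 c2 [].
split => //.
- apply/setP => p; rewrite in_setU in_setD.
  by case: (boolP (p \in G)) => //= Gp; rewrite (subsetP sub_G).
- by rewrite setIDA setDIl setDv set0I.
- by rewrite cardsDS // cardsX card_G mulnBr muln1.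
Qed.

(* The number of walks of length k between two given distinct vertices of K_m. *)
Definition kwalk (R : numFieldType) (m k : nat) : R :=
  ((m%:R - 1) ^+ k - (-1) ^+ k) / m%:R.
Arguments kwalk {R}.

Lemma kwalk0 (R : numFieldType) m : kwalk m 0 = 0 :> R.
Proof. by rewrite /kwalk subrr mul0r. Qed.

Lemma kwalkS (R : numFieldType) m k : (0 < m)%N ->
  kwalk m k.+1 = (m%:R - 1) * kwalk m k + (-1) ^+ k :> R.
Proof. by move=> m_gt0; rewrite /kwalk !exprS; field; rewrite pnatr_eq0 -lt0n. Qed.

Lemma odd_le_kwalk (R : realFieldType) m k : (1 < m)%N -> (odd k)%:R <= kwalk m k :> R.
Proof.
move=> m_gt1; have m_ge2 : 2 <= m%:R :> R by rewrite ler_nat.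
elim: k => [|k IHk]; first by rewrite kwalk0.
rewrite kwalkS ?(ltnW m_gt1) //= -signr_odd.
by case: (odd k) IHk => /= IHk; rewrite ?expr1 ?expr0; nra.
Qed.

Section PathExtension.
Variables (k : nat) (C : finType) (L : 'I_k.+2 -> {set C}).

Local Notation widen_last := (widen_ord (leqnSn k.+1)).

Definition belast_list : 'I_k.+1 -> {set C} := fun i => L (widen_last i).

Definition rcons_col (g : {ffun 'I_k.+1 -> C}) (x : C) : {ffun 'I_k.+2 -> C} :=
  [ffun i => if unlift ord_max i is Some j then g j else x].

Definition belast_col (f : {ffun 'I_k.+2 -> C}) : {ffun 'I_k.+1 -> C} :=
  [ffun i => f (widen_last i)].

Lemma widen_lastE (i : 'I_k.+1) : widen_last i = lift ord_max i.
Proof. by apply: val_inj; rewrite /= /bump leqNgt ltn_ord. Qed.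

Lemma rcons_col_widen g x i : rcons_col g x (widen_last i) = g i.
Proof. by rewrite ffunE widen_lastE liftK. Qed.

Lemma rcons_col_last g x : rcons_col g x ord_max = x.
Proof. by rewrite ffunE unlift_none. Qed.

Lemma rcons_col_first g x : rcons_col g x ord0 = g ord0.
Proof. by rewrite -(rcons_col_widen g x ord0); congr (rcons_col g x _); apply: val_inj. Qed.

Lemma rcons_col_inj x : injective (rcons_col ^~ x).
Proof. by move=> g1 g2 eq_g; apply/ffunP => i; rewrite -!(rcons_col_widen _ x) eq_g. Qed.

Lemma belast_colK f : rcons_col (belast_col f) (f ord_max) = f.
Proof.
apply/ffunP => i; rewrite ffunE.
by case: unliftP => [j ->|-> //]; rewrite ffunE widen_lastE.
Qed.

Lemma proper_rcons_col g x :
  proper_Lcol L (rcons_col g x) =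
  [&& proper_Lcol belast_list g, x \in L ord_max & g ord_max != x].
Proof.
have vertices : [forall i, rcons_col g x i \in L i]
    = [forall i, g i \in belast_list i] && (x \in L ord_max).
  rewrite forall_ord_recr rcons_col_last.
  by congr (_ && _); apply: eq_forallb => i; rewrite rcons_col_widen.
have lift0_widen (i : 'I_k) :
    lift ord0 (widen_ord (leqnSn k) i) = widen_last (lift ord0 i) by exact: val_inj.
have lift0_max : lift ord0 ord_max = ord_max :> 'I_k.+2 by apply: val_inj.
have edges : [forall i, rcons_col g x (widen_last i) != rcons_col g x (lift ord0 i)]
    = [forall i, g (widen_ord (leqnSn k) i) != g (lift ord0 i)] && (g ord_max != x).
  rewrite forall_ord_recr lift0_max rcons_col_last rcons_col_widen.
  by congr (_ && _); apply: eq_forallb => i; rewrite lift0_widen !rcons_col_widen.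
rewrite /proper_Lcol vertices edges.
by case: [forall i, _]; case: [forall i, _]; case: (_ \in _).
Qed.

Lemma Ncount_rcons c d : d \in L ord_max ->
  Ncount L c d =
    #|[set g | [&& proper_Lcol belast_list g, g ord0 == c & g ord_max != d]]|.
Proof.
move=> Ld; rewrite /Ncount -(card_imset _ (@rcons_col_inj d)); apply: eq_card => f.
rewrite inE; apply/idP/imsetP => [/and3P [Pf f0 /eqP fmax] | [g]].
  have fE := belast_colK f; rewrite fmax in fE.
  exists (belast_col f); last by rewrite fE.
  have g0 : belast_col f ord0 == c by rewrite -(rcons_col_first _ d) fE.
  move: Pf; rewrite -{1}fE proper_rcons_col => /and3P [Pg _ gmax].
  by rewrite inE Pg g0 gmax.
rewrite inE => /and3P [Pg g0 gmax] ->.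
by rewrite proper_rcons_col rcons_col_first rcons_col_last Pg Ld gmax g0 eqxx.
Qed.

Lemma Ncount_rcons_sum c d : d \in L ord_max ->
  Ncount L c d = \sum_(e in belast_list ord_max :\ d) Ncount belast_list c e.
Proof.
move=> Ld; rewrite Ncount_rcons // -sum1_card.
rewrite (partition_big (fun g : {ffun _} => g ord_max)
                      (mem (belast_list ord_max :\ d))) /=.
  apply: eq_bigr => e /setD1P [ne_ed _]; rewrite /Ncount -sum1_card.
  apply: eq_bigl => g; rewrite !inE.
  by have [-> | _] := eqVneq (g ord_max) e; rewrite ?ne_ed ?andbT ?andbF.
move=> g; rewrite !inE => /and3P [/andP [/forallP Pg _] _ gmax].
by rewrite gmax Pg.
Qed.
End PathExtension.

Lemma Ncount_single_vertex (C : finType) (L : 'I_1 -> {set C}) c :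
  c \in L ord0 -> (0 < Ncount L c c)%N.
Proof.
move=> Lc; rewrite card_gt0; apply/set0Pn; exists [ffun => c].
rewrite !inE !ffunE eqxx !andbT; apply/andP; split; apply/forallP => i.
  by rewrite ord1 ffunE.
by case: i.
Qed.

Lemma Ncount_bumped_lbound (R : realFieldType) (m k : nat) (C : finType)
    (L : 'I_k.+1 -> {set C}) c :
  (1 < m)%N -> m_assignment L m -> c \in L ord0 ->
  bumped_lbound (L ord_max) (fun e => (Ncount L c e)%:R) (kwalk m k : R) ((-1) ^+ k).
Proof.
move=> m_gt1; elim: k L c => [|k IHk] L c HL Lc.
  exists c => [|e _]; first by rewrite (ord1 ord_max).
  rewrite kwalk0 add0r expr0; have [-> | _] := eqVneq e c; last by rewrite ler0n.
  by rewrite ler1n Ncount_single_vertex.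
have HL' : m_assignment (belast_list L) m by move=> i; apply: HL.
have Lc' : c \in belast_list L ord0.
  by rewrite /belast_list (_ : widen_ord _ _ = ord0) //; apply: val_inj.
have := IHk _ _ HL' Lc'; rewrite -signr_odd => IH.
have [d0 Ld0 d0_ge] :=
  bumped_lbound_sumD1 (HL' ord_max) (HL ord_max) (odd_le_kwalk R k m_gt1) IH.
exists d0 => // d Ld; rewrite kwalkS ?(ltnW m_gt1) // exprS mulN1r -signr_odd.
by rewrite Ncount_rcons_sum // natr_sum; exact: d0_ge.
Qed.

Theorem lemma2p7 (k m : nat) (C : finType) (L : 'I_k.+1 -> {set C}) :
  (2 <= m)%N -> m_assignment L m ->
  (forall c d, c \in L ord0 -> d \in L ord_max ->
     Num.min ((((m%:R - 1) ^+ k - (-1) ^+ k) / m%:R) : rat)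
             (((m%:R - 1) ^+ k - (-1) ^+ k) / m%:R + (-1) ^+ k)
       <= (Ncount L c d)%:R) /\
  (exists A B : {set C * C},
     [/\ A :|: B = setX (L ord0) (L ord_max), A :&: B = set0,
         #|A| = m & #|B| = (m * (m - 1))%N] /\
         (forall c d, (c, d) \in A ->
            (((m%:R - 1) ^+ k - (-1) ^+ k) / m%:R + (-1) ^+ k : rat)
              <= (Ncount L c d)%:R) /\
         (forall c d, (c, d) \in B ->
            (((m%:R - 1) ^+ k - (-1) ^+ k) / m%:R : rat)
              <= (Ncount L c d)%:R)).
Proof.
move=> m_gt1 HL; have bound := Ncount_bumped_lbound rat m_gt1 HL.
split=> [c d Lc Ld | ].
  have [e0 _ /(_ d Ld) le_N] := bound c Lc; apply: le_trans le_N.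
  by rewrite ge_min; case: (d == e0); rewrite ?mulr1n ?addr0 lexx ?orbT.
have /fin_all_exists [g gP] : forall c, exists e0 : C, c \in L ord0 ->
    e0 \in L ord_max /\ forall e, e \in L ord_max ->
      kwalk m k + (-1) ^+ k *+ (e == e0) <= (Ncount L c e)%:R :> rat.
  by move=> c; have [/bound [e0 ? ?] | ?] := boolP (c \in L ord0); [exists e0 | exists c].
have := @graph_setX_partition _ _ (L ord0) (L ord_max) g (fun c Lc => (gP c Lc).1).
rewrite !HL; set A := [set _ | _ in _] => partition_A.
exists A, (setX (L ord0) (L ord_max) :\: A); split=> //.
split=> [c _ /imsetP [c' Lc' [-> ->]] | c d].
  by have [Lg /(_ _ Lg)] := gP c' Lc'; rewrite eqxx mulr1n.
rewrite !inE /= => /and3P [notA Lc Ld]; have [_ /(_ d Ld)] := gP c Lc.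
have -> : (d == g c) = false by apply: contraNF notA => /eqP ->; exact: imset_f.
by rewrite addr0.
Qed.
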